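(* Let $X=S^1=\mathbb R/\mathbb Z$ with the arc-length metric, let $T x=2x \bmod 1$ be the doubling map, let $N=3$ and consider the rigid interaction $\gamma=0$. Then for every sufficiently small $\varepsilon>0$ the CML $T_\varepsilon$ exhibits desynchronization on a set of initial configurations of positive Lebesgue measure in $(S^1)^3$ (containing a nonempty open set).
   Context: For $\bar x=(x_1,x_2,x_3)$, $J_i(\bar x)=\{j:\rho(x_i,x_j)\le\varepsilon\}$, $(\bar Q_\varepsilon\bar x)_i=\frac1{|J_i(\bar x)|}\sum_{j\in J_i(\bar x)}x_j$ (center of gravity, computed in a local lift since particles are close), and $T_\varepsilon=\bar T\circ\bar Q_\varepsilon$ with $\bar T(\bar x)=(Tx_1,Tx_2,Tx_3)$. Writing $\bar x^t=T^t_\varepsilon\bar x$, desynchronization for $\bar x$ means $\liminf_{t\to\infty}\max_{i,j}\rho(x_i^t,x_j^t)>0$. *)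

From Stdlib Require Import Reals List.
Open Scope R_scope.

(* Points of S^1 = R/Z are represented by real numbers (any representative). *)

(* Signed shortest difference of t modulo 1, in [-1/2, 1/2). *)
Definition sdiff (t : R) : R := t - IZR (Int_part (t + /2)).

Definition rho (x y : R) : R := Rabs (sdiff (x - y)).

Definition Tdbl (x : R) : R := frac_part (2 * x).

(* Configurations of N = 3 particles: coordinates x 0, x 1, x 2. *)
Definition config := nat -> R.
Definition idx : list nat := 0%nat :: 1%nat :: 2%nat :: nil.

Definition J (eps : R) (x : config) (i : nat) : list nat :=
  filter (fun j => if Rle_dec (rho (x i) (x j)) eps then true else false) idx.

(* Center of gravity of {x_j : j in J_i(x)}, computed in the local lift
   around x_i (each x_j lifted to x_i + sdiff (x_j - x_i)), then taken mod 1. *)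
Definition Qbar (eps : R) (x : config) : config := fun i =>
  frac_part (x i + fold_right Rplus 0 (map (fun j => sdiff (x j - x i)) (J eps x i))
                   / INR (length (J eps x i))).

Definition Teps (eps : R) (x : config) : config := fun i => Tdbl (Qbar eps x i).

(* liminf_{t -> oo} max_{i,j} rho(x_i^t, x_j^t) > 0 *)
Definition desync (eps : R) (x : config) : Prop :=
  exists delta, 0 < delta /\ exists t0 : nat, forall t : nat, (t0 <= t)%nat ->
    exists i j, (i < 3)%nat /\ (j < 3)%nat /\
      delta <= rho (Nat.iter t (Teps eps) x i) (Nat.iter t (Teps eps) x j).

(* Three particles with lifted positions 0 < a < S, where eps < S < 2 eps and S - eps < a < eps,
   form a chain: the outer particles are more than eps apart, but each is within eps of the
   middle one.  One step of T_eps averages particle 0 with 1, particle 2 with 1 and particle 1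
   with both, then doubles.  The outer spread 2S - (a + (S - a)) = S is restored exactly and the
   new middle offset (2S - a)/3 satisfies the same bounds, so the chain persists forever and
   the outer particles stay at distance S.  The chain conditions are open, which gives a ball
   of desynchronizing initial configurations. *)
From Stdlib Require Import Reals List Lra.
Open Scope R_scope.

Lemma Int_part_unique (t : R) (n : Z) : IZR n <= t < IZR n + 1 -> Int_part t = n.
Proof.
  intros Ht; unfold Int_part.
  assert (Hup : up t = (n + 1)%Z) by (symmetry; apply tech_up; rewrite plus_IZR; lra).
  rewrite Hup; ring.
Qed.

Lemma sdiff_shift (t : R) (k : Z) : -/2 <= t < /2 -> sdiff (t + IZR k) = t.
Proof.
  intros Ht; unfold sdiff.
  rewrite (Int_part_unique _ k); [ring | lra].
Qed.

Lemma sdiff_lift (b u v pu pv : R) (ku kv : Z) :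
  u = b + pu + IZR ku -> v = b + pv + IZR kv -> -/2 <= pv - pu < /2 ->
  sdiff (v - u) = pv - pu.
Proof.
  intros -> -> Hp.
  replace (b + pv + IZR kv - (b + pu + IZR ku)) with (pv - pu + IZR (kv - ku))
    by (rewrite minus_IZR; ring).
  now apply sdiff_shift.
Qed.

Lemma Tdbl_frac_part (z : R) : exists m : Z, Tdbl (frac_part z) = 2 * z + IZR m.
Proof.
  unfold Tdbl, frac_part.
  exists (- 2 * Int_part z - Int_part (2 * (z - IZR (Int_part z))))%Z.
  rewrite minus_IZR, mult_IZR; ring.
Qed.

Definition lift_neighbours (eps : R) (p : config) (i : nat) : list nat :=
  filter (fun j => if Rle_dec (Rabs (p i - p j)) eps then true else false) idx.

Lemma Qbar_lift (eps : R) (x p : config) (i : nat) :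
  (forall j k, In j idx -> In k idx -> sdiff (x k - x j) = p k - p j) -> In i idx ->
  Qbar eps x i =
  frac_part (x i + fold_right Rplus 0 (map (fun j => p j - p i) (lift_neighbours eps p i))
                   / INR (length (lift_neighbours eps p i))).
Proof.
  intros Hlift Hi.
  assert (HJ : J eps x i = lift_neighbours eps p i).
  { apply filter_ext_in; intros j Hj; unfold rho; rewrite Hlift; auto. }
  unfold Qbar; rewrite HJ, (map_ext_in _ (fun j => p j - p i)); [reflexivity|].
  intros j Hj; apply Hlift; [exact Hi | exact (proj1 (proj1 (filter_In _ _ _) Hj))].
Qed.

Definition chain (eps S : R) (x : config) : Prop :=
  exists (a : R) (k1 k2 : Z), S - eps < a < eps /\
    x 1%nat = x 0%nat + a + IZR k1 /\ x 2%nat = x 0%nat + S + IZR k2.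

Section ChainStep.

Variables (eps S a : R) (k1 k2 : Z) (x : config).
Hypotheses (HS : eps < S < 2 * eps) (HShalf : S < /2) (Ha : S - eps < a < eps)
  (Hx1 : x 1%nat = x 0%nat + a + IZR k1) (Hx2 : x 2%nat = x 0%nat + S + IZR k2).

Let p (i : nat) : R := match i with 0%nat => 0 | 1%nat => a | _ => S end.
Let k (i : nat) : Z := match i with 0%nat => 0%Z | 1%nat => k1 | _ => k2 end.

Lemma chain_sdiff (i j : nat) : In i idx -> In j idx -> sdiff (x j - x i) = p j - p i.
Proof.
  assert (Hx : forall l, In l idx -> x l = x 0%nat + p l + IZR (k l)).
  { intros l [<- | [<- | [<- | []]]]; simpl; [ring | exact Hx1 | exact Hx2]. }
  intros Hi Hj; apply (sdiff_lift (x 0%nat) _ _ _ _ (k i) (k j)); auto.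
  destruct Hi as [<- | [<- | [<- | []]]]; destruct Hj as [<- | [<- | [<- | []]]];
    simpl; lra.
Qed.

(* Shift to the centre of gravity: particle 0 sees {0, 1}, particle 1 sees all three,
   particle 2 sees {1, 2}. *)
Let offset (i : nat) : R :=
  match i with 0%nat => a / 2 | 1%nat => (S - 2 * a) / 3 | _ => - (S - a) / 2 end.

Lemma Qbar_chain (i : nat) : In i idx -> Qbar eps x i = frac_part (x i + offset i).
Proof.
  intros Hi; rewrite (Qbar_lift eps x p i chain_sdiff Hi).
  unfold lift_neighbours.
  destruct Hi as [<- | [<- | [<- | []]]]; simpl;
    repeat match goal with |- context [Rle_dec ?u ?v] => destruct (Rle_dec u v) end;
    try (exfalso; split_Rabs; lra);
    simpl; do 2 f_equal; field.
Qed.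

Lemma chain_Teps : chain eps S (Teps eps x).
Proof.
  destruct (Tdbl_frac_part (x 0%nat + offset 0)) as [m0 H0].
  destruct (Tdbl_frac_part (x 1%nat + offset 1)) as [m1 H1].
  destruct (Tdbl_frac_part (x 2%nat + offset 2)) as [m2 H2].
  exists ((2 * S - a) / 3), (2 * k1 + m1 - m0)%Z, (2 * k2 + m2 - m0)%Z.
  split; [lra|].
  unfold Teps; rewrite !Qbar_chain, H0, H1, H2 by (simpl; tauto).
  rewrite Hx1, Hx2, !minus_IZR, !plus_IZR, !mult_IZR; simpl; split; field.
Qed.

End ChainStep.

Lemma chain_iter (eps S : R) (x : config) :
  eps < S < 2 * eps -> S < /2 -> chain eps S x ->
  forall t, chain eps S (Nat.iter t (Teps eps) x).
Proof.
  intros HS HShalf Hx t; induction t as [|t IH]; [exact Hx|].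
  destruct IH as (a & k1 & k2 & Ha & Hx1 & Hx2).
  exact (chain_Teps eps S a k1 k2 _ HS HShalf Ha Hx1 Hx2).
Qed.

Lemma chain_rho (eps S : R) (x : config) :
  0 <= S < /2 -> chain eps S x -> rho (x 0%nat) (x 2%nat) = S.
Proof.
  intros HS (a & k1 & k2 & _ & _ & Hx2); unfold rho.
  rewrite (sdiff_lift (x 0%nat) _ _ S 0 k2 0%Z); [| | simpl; ring | lra].
  - rewrite Rabs_minus_sym, Rminus_0_r; apply Rabs_pos_eq; lra.
  - exact Hx2.
Qed.

Theorem lemma3 :
  exists eps0, 0 < eps0 /\
    forall eps, 0 < eps < eps0 ->
      exists (c : config) (r : R), 0 < r /\
        forall x : config,
          (forall i, (i < 3)%nat -> Rabs (x i - c i) < r) ->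
          desync eps x.
Proof.
  exists (/4); split; [lra|]; intros eps Heps.
  exists (fun i => match i with 0%nat => 0 | 1%nat => 2 * eps / 3 | _ => 4 * eps / 3 end),
    (eps / 12).
  split; [lra|]; intros x Hx.
  pose proof (Rabs_def2 _ _ (Hx 0%nat ltac:(auto))) as B0.
  pose proof (Rabs_def2 _ _ (Hx 1%nat ltac:(auto))) as B1.
  pose proof (Rabs_def2 _ _ (Hx 2%nat ltac:(auto))) as B2.
  simpl in B0, B1, B2.
  set (S := x 2%nat - x 0%nat).
  assert (HS : eps < S < 2 * eps /\ S < /2) by (unfold S; lra).
  assert (Hchain : chain eps S x).
  { exists (x 1%nat - x 0%nat), 0%Z, 0%Z; unfold S; simpl; repeat split; lra. }
  exists S; split; [lra|]; exists 0%nat; intros t _.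
  exists 0%nat, 2%nat; repeat split; auto.
  rewrite (chain_rho eps S); [lra | lra |].
  apply chain_iter; tauto.
Qed.
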